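(* Let $p$ be a prime with $p\equiv 1\pmod 4$, let $a$ be a generator of $\mathbb{F}_p^*$, let $k=\frac{p-1}{4}$, $\theta=\exp\!\left(\frac{2\pi i}{p-1}\right)$ and $\eta=\exp\!\left(\frac{2\pi i}{p}\right)$. For $0\le x<p$ define $\varphi_x\in\mathcal{H}=\mathbb{C}(\mathbb{F}_p)$ by $$\varphi_x(n)=\begin{cases}\dfrac{1}{\sqrt{p}}\,\eta^{2^{-1}a^k n^2}, & x=0,\\[2mm] \dfrac{1}{\sqrt{p(p-1)}}\displaystyle\sum_{j=1}^{p-1}\theta^{x\log_a j}\,\eta^{a^k(j-n)^2-2^{-1}a^k n^2}, & 0<x<p,\end{cases}\qquad n\in\mathbb{F}_p.$$ Then $\Phi_p=\{\varphi_x:0\le x<p\}$ is an orthonormal basis of $\mathcal{H}$ and each $\varphi_x$ is an eigenvector of the discrete Fourier transform $F$.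
   Context: $\mathcal{H}=\mathbb{C}(\mathbb{F}_p)$ is the Hilbert space of functions $\mathbb{F}_p\to\mathbb{C}$ with the standard inner product $\langle\varphi,\psi\rangle=\sum_{n\in\mathbb{F}_p}\varphi(n)\overline{\psi(n)}$. The discrete Fourier transform is the operator $F[\varphi](m)=\frac{1}{\sqrt{p}}\sum_{n\in\mathbb{F}_p}\eta^{mn}\varphi(n)$. Exponents of $\eta$ are computed in $\mathbb{F}_p$ (with $2^{-1}$ the inverse of $2$ in $\mathbb{F}_p$ and $a^k\in\mathbb{F}_p$); for $j\in\mathbb{F}_p^*$, $\log_a j$ is the unique $m\in\{0,\dots,p-2\}$ with $a^m=j$. *)

From mathcomp Require Import all_boot all_algebra.
From mathcomp Require Import reals trigo.
From mathcomp Require Import complex.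
Import GRing.Theory Num.Theory.

Set Implicit Arguments.
Unset Strict Implicit.
Unset Printing Implicit Defensive.

Local Open Scope ring_scope.
Local Open Scope complex_scope.

Section Defs.
Variable R : realType.
Local Notation C := R[i].

Definition expi (t : R) : C := cos t +i* sin t.

Definition eta_ (p : nat) : C := expi (2 * pi / p%:R).
Definition theta_ (p : nat) : C := expi (2 * pi / (p.-1)%:R).

(* eta^e for an exponent e computed in F_p (well defined since eta^p = 1) *)
Definition etaF (p : nat) (e : 'F_p) : C := eta_ p ^+ (val e).

Definition dlog (p : nat) (a j : 'F_p) : nat :=
  find (fun m => a ^+ m == j) (iota 0 p.-1).

Definition sqrtn (n : nat) : C := (Num.sqrt (n%:R : R))%:C.

Definition phi (p : nat) (a : 'F_p) (x : 'I_p) (n : 'F_p) : C :=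
  let k := (p.-1 %/ 4)%N in
  let ak := a ^+ k in
  let h := (2%:R : 'F_p)^-1 in
  if (x == 0 :> nat) then (sqrtn p)^-1 * etaF (h * ak * n ^+ 2)
  else (sqrtn (p * p.-1))^-1 *
       \sum_(j : 'F_p | j != 0)
          theta_ p ^+ (x * dlog a j)%N * etaF (ak * (j - n) ^+ 2 - h * ak * n ^+ 2).

Definition inner (p : nat) (f g : 'F_p -> C) : C := \sum_(n : 'F_p) f n * (g n)^*.

Definition DFT (p : nat) (f : 'F_p -> C) : 'F_p -> C :=
  fun m => (sqrtn p)^-1 * \sum_(n : 'F_p) etaF (m * n) * f n.

End Defs.

(* Let c = a^((p-1)/4), a square root of -1 in F_p, and h = 1/2. The chirp of
   index j is n |-> eta^(c (j - n)^2 - h c n^2) = eta^(c j^2 - 2 c j n) eta^(h c n^2):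
   a fixed quadratic phase modulated by the additive character of frequency -2cj.
   Distinct chirps are therefore orthogonal, of squared norm p. Now phi_0 is the
   chirp 0 scaled by 1/sqrt p, and for x > 0, phi_x is the sum over j <> 0 of the
   chirps j weighted by the multiplicative character chi_x(j) = theta^(x log_a j),
   so orthonormality reduces to the orthogonality of the characters chi_x; p
   orthonormal vectors in a space of dimension p form a basis. Completing the
   square with c^2 = -1 shows that F maps the chirp -cj to G/sqrt p times the
   chirp j, where G is the Gauss sum of n |-> eta^(h c n^2); as chi_x is
   multiplicative, F phi_x = chi_x(-c) G/sqrt p phi_x. *)

From mathcomp Require Import all_boot all_order all_algebra all_field.
From mathcomp Require Import reals trigo.
From mathcomp Require Import complex.
From mathcomp Require Import ring lra zify.
From Stdlib Require Import FunctionalExtensionality.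
Import Order.TTheory GRing.Theory Num.Theory.

Set Implicit Arguments.
Unset Strict Implicit.
Unset Printing Implicit Defensive.
Local Open Scope ring_scope.

Lemma sum_prim_root_exprM (F : idomainType) (n : nat) (z : F) (e : nat) :
  n.-primitive_root z -> \sum_(m < n) z ^+ (e * m) = if (n %| e)%N then n%:R else 0.
Proof.
move=> pz; case: ifP => [ne|nNe].
  rewrite (eq_bigr (fun _ => 1)) ?sumr_const ?card_ord // => m _.
  by rewrite exprM; move: ne; rewrite (prim_order_dvd pz) => /eqP ->; rewrite expr1n.
under eq_bigr do rewrite exprM.
have ze1 : z ^+ e - 1 != 0 by rewrite subr_eq0 -(prim_order_dvd pz) nNe.
apply: (mulfI ze1); rewrite -subrX1 mulr0 -exprM mulnC exprM.
by rewrite (prim_expr_order pz) expr1n subrr.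
Qed.

Lemma sumr_delta (F : pzRingType) (T : finType) (f : T -> F) (j : T) :
  \sum_i f i * (j == i)%:R = f j.
Proof.
rewrite (bigD1 j) //= eqxx mulr1 big1 ?addr0 // => i i_neq_j.
by rewrite eq_sym (negbTE i_neq_j) mulr0.
Qed.

Lemma orthonormal_spans (F : numClosedFieldType) (T : finType) (n : nat)
    (v : 'I_n -> T -> F) :
  #|T| = n -> (forall x y, \sum_t v x t * (v y t)^* = (x == y)%:R) ->
  forall f : T -> F, exists c : 'I_n -> F, f = (fun t => \sum_x c x * v x t).
Proof.
move=> cardT orth f.
pose e (i : 'I_n) : T := enum_val (cast_ord (esym cardT) i).
have e_bij : bijective e.
  exists (fun t => cast_ord cardT (enum_rank t)) => [i|t].
    by rewrite /e enum_valK cast_ordKV.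
  by rewrite /e cast_ordK enum_rankK.
pose M : 'M[F]_n := \matrix_(x, i) v x (e i).
pose N : 'M[F]_n := \matrix_(i, y) (v y (e i))^*.
have MN : M *m N = 1%:M.
  apply/matrixP => x y; rewrite !mxE -orth (reindex e) //=.
    by apply: eq_bigr => i _; rewrite !mxE.
  by apply: onW_bij.
(* [N] is a left inverse of the square matrix [M], hence also a right inverse. *)
have complete t s : \sum_x (v x t)^* * v x s = (t == s)%:R.
  have [r eK rK] := e_bij; rewrite -[t]rK -[s]rK (bij_eq e_bij).
  have := congr1 (fun A : 'M[F]_n => A (r t) (r s)) (mulmx1C MN); rewrite !mxE => <-.
  by apply: eq_bigr => x _; rewrite !mxE.
exists (fun x => \sum_t f t * (v x t)^*); apply: functional_extensionality => s.
under eq_bigr do rewrite mulr_suml.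
rewrite exchange_big /=.
under eq_bigr do under eq_bigr do rewrite -mulrA.
under eq_bigr do rewrite -mulr_sumr complete eq_sym.
by rewrite sumr_delta.
Qed.

Section ComplexNumbers.
Variable R : realType.

Lemma expiD (s t : R) : expi (s + t) = expi s * expi t.
Proof.
rewrite /expi cosD sinD; apply/eqP; rewrite eq_complex /=.
by apply/andP; split; apply/eqP; ring.
Qed.

Lemma expi0 : expi (0 : R) = 1.
Proof. by rewrite /expi cos0 sin0. Qed.

Lemma expiX (t : R) (n : nat) : expi t ^+ n = expi (t *+ n).
Proof.
elim: n => [|n IH]; first by rewrite expr0 mulr0n expi0.
by rewrite exprS IH mulrS expiD.
Qed.

Lemma expi2pi : expi (pi *+ 2 : R) = 1.
Proof. by rewrite /expi cos2pi sin2pi. Qed.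

Lemma conj_expi (t : R) : (expi t)^* = expi (- t).
Proof. by rewrite /expi cosN sinN. Qed.

Lemma conj_expi_mul (t : R) : (expi t)^* * expi t = 1.
Proof. by rewrite conj_expi -expiD addNr expi0. Qed.

Lemma expi_neq0 (t : R) : expi t != 0.
Proof. by apply: contra_eq_neq (conj_expi_mul t) => ->; rewrite mulr0 eq_sym oner_neq0. Qed.

Lemma expi_neq1 (t : R) : 0 < t < pi *+ 2 -> expi t != 1.
Proof.
move=> /andP[t_gt0 t_lt2pi]; apply/negP => /eqP/eqP.
rewrite eq_complex /= => /andP[/eqP cos1 /eqP sin0].
have [t_pi|pi_t|t_pi] := ltgtP t pi.
- by have := sin_gt0_pi (x := t); rewrite t_gt0 t_pi sin0 ltxx => /(_ isT).
- have tpi_bound : 0 < t - pi < pi by rewrite subr_gt0 pi_t /= ltrBlDr -mulr2n.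
  move: sin0; rewrite -[t](subrK pi) sinDpi => /eqP; rewrite oppr_eq0 => /eqP sin0.
  by have := sin_gt0_pi tpi_bound; rewrite sin0 ltxx.
- by move: cos1; rewrite t_pi cospi => ?; lra.
Qed.

Lemma prim_root_expi (n : nat) : (0 < n)%N -> n.-primitive_root (expi (pi *+ 2 / n%:R : R)).
Proof.
move=> n_gt0; set z := expi _.
have n_neq0 : n%:R != 0 :> R by rewrite pnatr_eq0 -lt0n.
have zn : z ^+ n = 1 by rewrite expiX -[_ *+ n]mulr_natr divfK // expi2pi.
have [m pm m_dvd_n] := prim_order_exists n_gt0 zn.
have /orP[/eqP <-//|m_lt_n] : (m == n) || (m < n)%N by rewrite -leq_eqVlt dvdn_leq.
have pi2_gt0 : 0 < pi *+ 2 :> R by rewrite mulrn_wgt0 // pi_gt0.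
have angle_bound : 0 < (pi *+ 2 / n%:R : R) *+ m < pi *+ 2.
  rewrite -[_ *+ m]mulr_natr; apply/andP; split.
    by rewrite mulr_gt0 ?divr_gt0 ?ltr0n ?(prim_order_gt0 pm).
  by rewrite -mulrA gtr_pMr // mulrC ltr_pdivrMr ?ltr0n // mul1r ltr_nat.
by move: (prim_expr_order pm); rewrite expiX => /eqP; rewrite (negbTE (expi_neq1 angle_bound)).
Qed.

Lemma conj_sqrtnV (n : nat) : ((sqrtn R n)^-1)^* = (sqrtn R n)^-1.
Proof. by rewrite conj_Creal // rpredV /sqrtn complex_real. Qed.

Lemma sqrtnV_normE (n : nat) : (sqrtn R n)^-1 * ((sqrtn R n)^-1)^* = n%:R^-1.
Proof.
by rewrite conj_sqrtnV -invfM -expr2 /sqrtn -rmorphXn sqr_sqrtr ?ler0n // rmorph_nat.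
Qed.

End ComplexNumbers.

Section PrimeField.
Variables (R : realType) (p : nat).
Hypothesis p_prime : prime p.
Local Notation C := R[i].
Local Notation eF := (@etaF R p).

Lemma prim_root_eta : p.-primitive_root (eta_ R p).
Proof. by rewrite /eta_ mulr_natl; apply: prim_root_expi; rewrite prime_gt0. Qed.

Lemma etaF_nat (m : nat) : eF m%:R = eta_ R p ^+ m.
Proof. by rewrite /etaF /= val_Fp_nat // (prim_expr_mod prim_root_eta). Qed.

Lemma etaFD (x y : 'F_p) : eF (x + y) = eF x * eF y.
Proof. by rewrite -[x]natr_Zp -[y]natr_Zp -natrD !etaF_nat exprD. Qed.

Lemma etaF0 : eF 0 = 1.
Proof. by rewrite -(natr_Zp 0) etaF_nat expr0. Qed.

Lemma etaF_neq0 (x : 'F_p) : eF x != 0.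
Proof. exact/expf_neq0/expi_neq0. Qed.

Lemma conj_etaF (x : 'F_p) : (eF x)^* = eF (- x).
Proof.
apply: (mulIf (etaF_neq0 x)); rewrite -etaFD addNr etaF0.
by rewrite /etaF /eta_ rmorphXn -exprMn conj_expi_mul expr1n.
Qed.

Lemma etaFB (x y : 'F_p) : eF (x - y) = eF x * (eF y)^*.
Proof. by rewrite conj_etaF etaFD. Qed.

Lemma sum_etaFM (b : 'F_p) : \sum_n eF (b * n) = if b == 0 then p%:R else 0.
Proof.
have [->|b_neq0] := eqVneq b 0.
  by under eq_bigr do rewrite mul0r etaF0; rewrite sumr_const card_Fp.
have -> : \sum_n eF (b * n) = \sum_n eF n.
  by rewrite [RHS](reindex_inj (mulfI b_neq0)).
have eta_neq1 : eta_ R p - 1 != 0.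
  rewrite subr_eq0 -[X in X != _]expr1 -(prim_order_dvd prim_root_eta).
  by rewrite gtnNdvd // prime_gt1.
apply: (mulIf eta_neq1); rewrite mul0r mulrBr mulr1; apply/eqP.
rewrite subr_eq0 -[eta_ R p]expr1 -etaF_nat mulr_suml; apply/eqP.
under eq_bigr do rewrite -etaFD.
by rewrite [RHS](reindex_inj (addIr 1%:R)).
Qed.

Lemma fermat_little (j : 'F_p) : j != 0 -> j ^+ p.-1 = 1.
Proof.
move=> j_neq0; apply: (mulIf j_neq0); rewrite mul1r -exprSr prednK ?prime_gt0 //.
by have := expf_card j; rewrite card_Fp.
Qed.

Section PrimitiveRoot.
Variable a : 'F_p.
Hypothesis a_prim : (p.-1).-primitive_root a.

Let pred_p_gt0 : (0 < p.-1)%N.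
Proof. by have := prime_gt1 p_prime; case: p => [|[]]. Qed.

Lemma prim_root_theta : (p.-1).-primitive_root (theta_ R p).
Proof. by rewrite /theta_ mulr_natl; apply: prim_root_expi. Qed.

Lemma primitive_root_neq0 : a != 0.
Proof. by rewrite (prim_root_eq0 a_prim) -lt0n. Qed.

Lemma dlogP (j : 'F_p) : j != 0 -> (dlog a j < p.-1)%N /\ a ^+ dlog a j = j.
Proof.
move=> j_neq0; have [i ->] := prim_rootP a_prim (fermat_little j_neq0).
have has_i : has (fun m => a ^+ m == a ^+ i) (iota 0 p.-1).
  by apply/hasP; exists (val i); rewrite ?mem_iota //=.
have := nth_find 0 has_i; rewrite has_find size_iota in has_i.
by rewrite /dlog nth_iota // add0n => /eqP.
Qed.

Lemma dlog_expr (m : nat) : (m < p.-1)%N -> dlog a (a ^+ m) = m.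
Proof.
move=> m_lt; have [dlog_lt /eqP] := dlogP (expf_neq0 m primitive_root_neq0).
by rewrite (eq_prim_root_expr a_prim) !modn_small // => /eqP.
Qed.

Lemma sum_dlog (F : nat -> C) :
  \sum_(j : 'F_p | j != 0) F (dlog a j) = \sum_(m < p.-1) F m.
Proof.
pose m0 : 'I_p.-1 := Ordinal pred_p_gt0.
rewrite (reindex (fun m : 'I_p.-1 => a ^+ m)) /=.
  by apply: eq_big => [m|m _]; rewrite ?expf_neq0 ?primitive_root_neq0 ?dlog_expr.
exists (fun j => insubd m0 (dlog a j)) => [m _|j].
  by apply: val_inj; rewrite /= insubdK dlog_expr //; apply: ltn_ord.
by rewrite inE => /dlogP[dlog_lt expr_dlog]; rewrite insubdK.
Qed.

Definition chi (x : nat) (j : 'F_p) : C := theta_ R p ^+ (x * dlog a j).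

Lemma chi_neq0 (x : nat) (j : 'F_p) : chi x j != 0.
Proof. exact/expf_neq0/expi_neq0. Qed.

Lemma chiM (x : nat) (u v : 'F_p) : u != 0 -> v != 0 -> chi x (u * v) = chi x u * chi x v.
Proof.
move=> u_neq0 v_neq0.
have [_ expr_u] := dlogP u_neq0; have [_ expr_v] := dlogP v_neq0.
have [_ expr_uv] := dlogP (mulf_neq0 u_neq0 v_neq0).
have : a ^+ dlog a (u * v) == a ^+ (dlog a u + dlog a v) by rewrite exprD expr_u expr_v expr_uv.
rewrite (eq_prim_root_expr a_prim) => /eqP dlogM.
rewrite /chi -exprD -mulnDr ![(x * _)%N]mulnC !exprM.
by rewrite -(prim_expr_mod prim_root_theta) dlogM (prim_expr_mod prim_root_theta).
Qed.

Lemma conj_chi (x : nat) (j : 'F_p) : (x <= p.-1)%N -> (chi x j)^* = chi (p.-1 - x) j.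
Proof.
move=> x_le; apply: (mulIf (chi_neq0 x j)).
rewrite /chi [RHS]/= -exprD -mulnDl subnK // [in RHS]exprM.
rewrite (prim_expr_order prim_root_theta) expr1n.
by rewrite rmorphXn -exprMn conj_expi_mul expr1n.
Qed.

Lemma chi_orthogonal (x y : nat) : (0 < x <= p.-1)%N -> (0 < y <= p.-1)%N ->
  \sum_(j : 'F_p | j != 0) chi x j * (chi y j)^* = (x == y)%:R * p.-1%:R.
Proof.
move=> /andP[x_gt0 x_le] /andP[y_gt0 y_le].
under eq_bigr do rewrite conj_chi // /chi -exprD -mulnDl.
rewrite (sum_dlog (fun d => theta_ R p ^+ ((x + (p.-1 - y)) * d))).
rewrite sum_prim_root_exprM; last exact: prim_root_theta.
have [<-|x_neq_y] := eqVneq x y; first by rewrite subnKC // dvdnn mul1r.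
case: ifP; rewrite ?mul0r // => /dvdnP[q sum_eq].
case: q sum_eq x_neq_y => [|[|q]] sum_eq /eqP x_neq_y; nia.
Qed.

Section ChirpBasis.
Hypothesis p_mod4 : (p %% 4 = 1)%N.
Local Notation c := (a ^+ (p.-1 %/ 4)).
Local Notation h := ((2%:R : 'F_p)^-1).
Local Notation K0 := ((sqrtn R p)^-1).
Local Notation K := ((sqrtn R (p * p.-1))^-1).
Local Notation G := (\sum_(n : 'F_p) eF (h * c * n ^+ 2)).

Let p_gt4 : (4 < p)%N.
Proof. by have := prime_gt1 p_prime; lia. Qed.

Lemma two_neq0 : (2%:R : 'F_p) != 0.
Proof.
apply/eqP => two_eq0; have := val_Fp_nat p_prime 2.
by rewrite two_eq0 /= modn_small // (leq_trans _ p_gt4).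
Qed.

Lemma sqr_c : c ^+ 2 = -1.
Proof.
set w := c ^+ 2.
have w2 : w ^+ 2 = 1.
  by rewrite /w -!exprM (_ : (_ * (2 * 2) = p.-1)%N) ?(prim_expr_order a_prim) //; lia.
have w_neq1 : w != 1.
  rewrite /w -exprM -(prim_order_dvd a_prim); apply/negP => /dvdn_leq; lia.
have : (w - 1) * (w + 1) = 0 by rewrite -subr_sqr expr1n w2 subrr.
by move/eqP; rewrite mulf_eq0 subr_eq0 (negbTE w_neq1) addr_eq0 => /eqP.
Qed.

Lemma c_neq0 : c != 0.
Proof. exact/expf_neq0/primitive_root_neq0. Qed.

Lemma oppc_neq0 : - c != 0.
Proof. by rewrite oppr_eq0 c_neq0. Qed.

(* [ring] knows neither [c ^+ 2 = -1] nor [h * 2 = 1]: identities that need them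
   are proved by exhibiting their cofactors [q1] and [q2]. *)
Lemma eq_mod_relations (X Y q1 q2 : 'F_p) :
  X - Y = q1 * (c ^+ 2 + 1) + q2 * (h * 2%:R - 1) -> X = Y.
Proof.
rewrite sqr_c mulVf ?two_neq0 // addNr subrr !mulr0 addr0.
by move/eqP; rewrite subr_eq0 => /eqP.
Qed.

Definition chirp (j n : 'F_p) : C := eF (c * (j - n) ^+ 2 - h * c * n ^+ 2).

Lemma chirp_orthogonal (j j' : 'F_p) :
  \sum_n chirp j n * (chirp j' n)^* = (j == j')%:R * p%:R.
Proof.
under eq_bigr do rewrite -etaFB.
have chirpB n : c * (j - n) ^+ 2 - h * c * n ^+ 2 - (c * (j' - n) ^+ 2 - h * c * n ^+ 2)
    = c * (j ^+ 2 - j' ^+ 2) + 2%:R * c * (j' - j) * n by ring.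
under eq_bigr do rewrite chirpB etaFD.
rewrite -mulr_sumr sum_etaFM.
have [<-|j_neq_j'] := eqVneq j j'; first by rewrite !subrr !mulr0 eqxx etaF0 !mul1r.
rewrite !mulf_eq0 (negbTE two_neq0) (negbTE c_neq0) subr_eq0 eq_sym (negbTE j_neq_j').
by rewrite mulr0 mul0r.
Qed.

Lemma inner_chirp_comb (u v : 'F_p -> C) :
  inner (fun n => \sum_j u j * chirp j n) (fun n => \sum_j v j * chirp j n)
  = p%:R * \sum_j u j * (v j)^*.
Proof.
rewrite /inner.
under eq_bigr => n _ do rewrite rmorph_sum mulr_suml.
under eq_bigr => n _ do under eq_bigr => j _ do rewrite mulr_sumr.
rewrite exchange_big /=; under eq_bigr => j _ do rewrite exchange_big /=.
under eq_bigr => j _ do under eq_bigr => j' _ do under eq_bigr => n _ do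
  rewrite rmorphM mulrACA.
under eq_bigr => j _ do under eq_bigr => j' _ do
  rewrite -mulr_sumr chirp_orthogonal mulrA.
under eq_bigr => j _ do rewrite -mulr_suml sumr_delta.
by rewrite mulr_sumr; apply: eq_bigr => j _; rewrite mulrC.
Qed.

Lemma sum_gauss_shift (b : 'F_p) :
  \sum_n eF (b * n + h * c * n ^+ 2) = eF (h * c * b ^+ 2) * G.
Proof.
have complete_square n : b * n + h * c * n ^+ 2 = h * c * (n - c * b) ^+ 2 + h * c * b ^+ 2.
  by apply: (eq_mod_relations (q1 := 2%:R * h * b * n - h * c * b ^+ 2) (q2 := - (b * n))); ring.
under eq_bigr do rewrite complete_square etaFD.
rewrite -mulr_suml mulrC; congr (_ * _).
by rewrite [RHS](reindex_inj (addIr (- (c * b)))).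
Qed.

Lemma sum_chirp_rot (m j : 'F_p) : \sum_n eF (m * n) * chirp (- c * j) n = G * chirp j m.
Proof.
have chirp_rot n : m * n + (c * (- c * j - n) ^+ 2 - h * c * n ^+ 2)
    = - (c * j ^+ 2) + ((m - 2%:R * j) * n + h * c * n ^+ 2).
  by apply: (eq_mod_relations (q1 := c * j ^+ 2 + 2%:R * j * n) (q2 := - (c * n ^+ 2))); ring.
have chirp_split : c * (j - m) ^+ 2 - h * c * m ^+ 2
    = - (c * j ^+ 2) + h * c * (m - 2%:R * j) ^+ 2.
  apply: (eq_mod_relations (q1 := 0)
    (q2 := - (2%:R * c * j ^+ 2) + 2%:R * c * j * m - c * m ^+ 2)).
  by ring.
under eq_bigr do rewrite /chirp -etaFD chirp_rot etaFD.
by rewrite -mulr_sumr sum_gauss_shift /chirp chirp_split etaFD mulrA mulrC.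
Qed.

Lemma DFT_chirp_comb (u : 'F_p -> C) :
  DFT (fun n => \sum_j u j * chirp j n)
  = (fun m => K0 * G * \sum_j u (- c * j) * chirp j m).
Proof.
apply: functional_extensionality => m; rewrite /DFT -mulrA; congr (_ * _).
under eq_bigr do rewrite mulr_sumr.
rewrite exchange_big /= (reindex_inj (mulfI oppc_neq0)) /=.
under eq_bigr do under eq_bigr do rewrite mulrCA.
under eq_bigr do rewrite -mulr_sumr sum_chirp_rot.
by rewrite mulr_sumr; apply: eq_bigr => j _; rewrite mulrCA.
Qed.

Definition weight (x : 'I_p) (j : 'F_p) : C :=
  if x == 0 :> nat then K0 * (j == 0)%:R else K * (j != 0)%:R * chi x j.

Lemma phi_weightE (x : 'I_p) : phi R a x = (fun n => \sum_j weight x j * chirp j n).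
Proof.
apply: functional_extensionality => n; rewrite /phi /weight.
case: eqP => [x_eq0|x_neq0].
  rewrite (bigD1 0) //= mulr1 big1 ?addr0 => [|j j_neq0]; last first.
    by rewrite (negbTE j_neq0) mulr0 mul0r.
  congr (_ * _); rewrite /chirp; congr eF.
  by apply: (eq_mod_relations (q1 := 0) (q2 := c * n ^+ 2)); ring.
rewrite big_mkcond mulr_sumr; apply: eq_bigr => j _ /=.
by case: (j != 0); rewrite /= ?mulr1 ?mulr0 ?mul0r // mulrA.
Qed.

Lemma weight_rot (x : 'I_p) (j : 'F_p) :
  weight x (- c * j) = (if x == 0 :> nat then 1 else chi x (- c)) * weight x j.
Proof.
rewrite /weight; case: eqP => _; first by rewrite mul1r mulf_eq0 (negbTE oppc_neq0).
have [->|j_neq0] := eqVneq j 0; first by rewrite mulr0 eqxx /= !(mulr0, mul0r).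
by rewrite mulf_neq0 ?oppc_neq0 // chiM ?oppc_neq0 // mulrCA.
Qed.

Lemma weight_orthonormal (x y : 'I_p) :
  p%:R * \sum_j weight x j * (weight y j)^* = (x == y)%:R.
Proof.
have p_neq0 : p%:R != 0 :> C by rewrite pnatr_eq0 -lt0n prime_gt0.
rewrite /weight; case: eqP => [x_eq0|x_neq0]; case: eqP => [y_eq0|y_neq0].
- rewrite (bigD1 0) //= big1 => [|j j_neq0]; last by rewrite (negbTE j_neq0) !mulr0 mul0r.
  have -> : x == y by rewrite -val_eqE /= x_eq0 y_eq0.
  by rewrite mulr1 addr0 sqrtnV_normE mulfV.
- have -> : x == y = false by apply/eqP => x_eq_y; apply: y_neq0; rewrite -x_eq_y.
  rewrite big1 ?mulr0 // => j _.
  by have [->|j_neq0] := eqVneq j 0; rewrite ?eqxx ?(negbTE j_neq0) /= !(mulr0, mul0r, rmorph0).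
- have -> : x == y = false by apply/eqP => x_eq_y; apply: x_neq0; rewrite x_eq_y.
  rewrite big1 ?mulr0 // => j _.
  by have [->|j_neq0] := eqVneq j 0; rewrite ?eqxx ?(negbTE j_neq0) /= !(mulr0, mul0r, rmorph0).
have pred_p_neq0 : p.-1%:R != 0 :> C by rewrite pnatr_eq0 -lt0n.
have -> : \sum_j K * (j != 0)%:R * chi x j * (K * (j != 0)%:R * chi y j)^*
    = K * K^* * \sum_(j | j != 0) chi x j * (chi y j)^*.
  rewrite [in RHS]big_mkcond mulr_sumr; apply: eq_bigr => j _.
  by case: (j != 0); rewrite /= !(rmorphM, rmorph1, rmorph0, mulr1, mulr0, mul0r) // mulrACA.
rewrite chi_orthogonal; last 2 first.
- by have := ltn_ord x; lia.
- by have := ltn_ord y; lia.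
rewrite sqrtnV_normE natrM.
rewrite val_eqE; case: (x == y); last by rewrite /= !(mul0r, mulr0).
by field; rewrite pred_p_neq0 p_neq0.
Qed.

Lemma inner_phi (x y : 'I_p) : inner (phi R a x) (phi R a y) = (x == y)%:R.
Proof. by rewrite !phi_weightE inner_chirp_comb weight_orthonormal. Qed.

Lemma DFT_phi (x : 'I_p) :
  DFT (phi R a x)
  = (fun n => K0 * G * (if x == 0 :> nat then 1 else chi x (- c)) * phi R a x n).
Proof.
rewrite phi_weightE DFT_chirp_comb; apply: functional_extensionality => m /=.
rewrite -[RHS]mulrA; congr (_ * _).
by rewrite mulr_sumr; apply: eq_bigr => j _; rewrite weight_rot mulrA.
Qed.

End ChirpBasis.
End PrimitiveRoot.
End PrimeField.

Theorem theorem3 (R : realType) (p : nat) (a : 'F_p) :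
  prime p -> (p %% 4 = 1)%N -> (p.-1).-primitive_root a ->
  [/\ (forall x y : 'I_p, inner (phi R a x) (phi R a y) = (x == y)%:R),
      (forall f : 'F_p -> R[i], exists c : 'I_p -> R[i],
          f = (fun n => \sum_(x : 'I_p) c x * phi R a x n)) &
      (forall x : 'I_p, (exists n, phi R a x n != 0) /\
          exists lambda : R[i], DFT (phi R a x) = (fun n => lambda * phi R a x n))].
Proof.
move=> p_prime p_mod4 a_prim.
have orth := inner_phi R p_prime a_prim p_mod4.
split=> [//|f|x].
  exact: orthonormal_spans (card_Fp p_prime) orth f.
split; last by eexists; apply: DFT_phi.
have [n phi_n_neq0|phi_eq0] := pickP (fun n => phi R a x n != 0); first by exists n.
have := orth x x; rewrite eqxx /inner big1 => [/eqP|n _]; first by rewrite eq_sym oner_eq0.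
by move/negbFE/eqP: (phi_eq0 n) => ->; rewrite mul0r.
Qed.
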